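(* Let $a,b,c\in C(\mathbb{R}^+)$, let $y\not\equiv0$ be a solution of $\dddot y+a(t)\ddot y+b(t)\dot y+c(t)y=0$, and let $\kappa(t)=x(t)/|x(t)|$ where $x(t)=(y(t),\dot y(t),\ddot y(t))$. Let $[t_0,t_1]\subset\mathbb{R}^+$ be such that $\kappa(t)$ is not a pole $(0,0,\pm1)$ for $t\in[t_0,t_1]$, and write $\kappa(t)=P(\varphi(t),\theta(t))$ with continuous $\varphi,\theta$. Suppose $\varphi(t_0)\equiv\varphi(t_1)\equiv\frac{\pi}{2}\pmod{2\pi}$ and $\varphi(t_1)=\varphi(t_0)-2\pi$. Then there is a continuous curve $\tilde\kappa:[0,1]\to S^2\setminus\Omega$ with $\tilde\kappa(0)=\kappa(t_0)$, $\tilde\kappa(1)=\kappa(t_1)$, whose image is contained in $\kappa([t_0,t_1])$ (i.e. it is obtained from $\kappa|_{[t_0,t_1]}$ by deleting some parts).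
   Context: $S^2$ is the unit sphere in $\mathbb{R}^3$ and $P(\varphi,\theta)=(\cos\theta\cos\varphi,\cos\theta\sin\varphi,\sin\theta)\in S^2$ denotes the point with spherical coordinates $\varphi$ (longitude) and $\theta\in[-\pi/2,\pi/2]$ (latitude); thus $y=|x|\cos\theta\cos\varphi$, $\dot y=|x|\cos\theta\sin\varphi$, $\ddot y=|x|\sin\theta$. $\Omega=\{(x_0,x_1,x_2)\in S^2: x_0x_2-x_1^2>0\}$. *)

From Stdlib Require Import Reals ZArith.
From Coquelicot Require Import Coquelicot.
Open Scope R_scope.

Definition pt3 := (R * R * R)%type.

Definition Psph (phi theta : R) : pt3 :=
  (cos theta * cos phi, cos theta * sin phi, sin theta).

Definition sqnorm3 (p : pt3) : R :=
  let '(x0, x1, x2) := p in x0 ^ 2 + x1 ^ 2 + x2 ^ 2.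

Definition norm3 (p : pt3) : R := sqrt (sqnorm3 p).

Definition InS2 (p : pt3) : Prop := sqnorm3 p = 1.

Definition InOmega (p : pt3) : Prop :=
  InS2 p /\ (let '(x0, x1, x2) := p in x0 * x2 - x1 ^ 2 > 0).

Definition kappa (y dy ddy : R -> R) (t : R) : pt3 :=
  let n := norm3 (y t, dy t, ddy t) in
  (y t / n, dy t / n, ddy t / n).

Definition north_pole : pt3 := (0, 0, 1).
Definition south_pole : pt3 := (0, 0, -1).

Definition cont_on {V : UniformSpace} (f : R -> V) (u v : R) : Prop :=
  forall t, u <= t <= v ->
    filterlim f (within (fun s => u <= s <= v) (locally t)) (locally (f t)).

From Stdlib Require Import Reals ZArith Lra Lia Classical ClassicalEpsilon.
From Coquelicot Require Import Coquelicot.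
Open Scope R_scope.

(* The derivative at t of
   s |-> y(t) y'(s) - y'(t) y(s) has the sign of y y'' - y'^2, i.e. of
   [omega_det (phi t) (theta t)], while the function itself has the sign of
   phi(s) - phi(t); so phi is locally strictly increasing inside Omega and
   strictly decreasing outside its closure. Meridians cos phi = 0 lie outside
   Omega, so phi passes phi(t0) - pi exactly once, splitting [t0, t1] into two
   half-turns. On a half-turn, every longitude u is reached at some t outside
   Omega (otherwise phi could only increase through u), and [omega_det] is
   monotone in the latitude; so among the times t with phi(t) = u one of
   lowest latitude theta(t) gives kappa(t) outside Omega. That latitude
   depends continuously on u: lower semicontinuity by compactness, upper
   semicontinuity by the local monotonicity of phi. Following these points
   from phi(t0) down to phi(t1) gives the curve. *)

Definition cont_in (f : R -> R) (a b : R) : Prop :=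
  forall t, a <= t <= b -> forall e, 0 < e -> exists d, 0 < d /\
    forall s, a <= s <= b -> Rabs (s - t) < d -> Rabs (f s - f t) < e.

Lemma cont_on_cont_in (f : R -> R) a b : cont_on f a b -> cont_in f a b.
Proof.
  intros Hf t Ht e He.
  destruct (proj1 (filterlim_locally f (f t)) (Hf t Ht) (mkposreal e He)) as [d Hd].
  exists d. split; [apply cond_pos|]. intros s Hs Hst. exact (Hd s Hst Hs).
Qed.

Lemma cont_on_triple f1 f2 f3 a b :
  cont_in f1 a b -> cont_in f2 a b -> cont_in f3 a b ->
  cont_on (fun s => (f1 s, f2 s, f3 s) : pt3) a b.
Proof.
  intros H1 H2 H3 t Ht. apply filterlim_locally. intros e.
  destruct (H1 t Ht e (cond_pos e)) as [d1 [Hd1 K1]].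
  destruct (H2 t Ht e (cond_pos e)) as [d2 [Hd2 K2]].
  destruct (H3 t Ht e (cond_pos e)) as [d3 [Hd3 K3]].
  exists (mkposreal _ (Rmin_pos _ _ Hd1 (Rmin_pos _ _ Hd2 Hd3))).
  intros s Hst Hs. change (Rabs (s - t) < Rmin d1 (Rmin d2 d3)) in Hst.
  pose proof (Rmin_l d1 (Rmin d2 d3)). pose proof (Rmin_l d2 d3).
  pose proof (Rmin_r d1 (Rmin d2 d3)). pose proof (Rmin_r d2 d3).
  split; [split|].
  - change (Rabs (f1 s - f1 t) < e). apply K1; auto; lra.
  - change (Rabs (f2 s - f2 t) < e). apply K2; auto; lra.
  - change (Rabs (f3 s - f3 t) < e). apply K3; auto; lra.
Qed.

Lemma cont_in_subinterval f a b a' b' :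
  cont_in f a b -> a <= a' -> b' <= b -> cont_in f a' b'.
Proof.
  intros Hf Ha Hb t Ht e He. destruct (Hf t ltac:(lra) e He) as [d [Hd H]].
  exists d; split; auto. intros s Hs Hst. apply H; auto; lra.
Qed.

Lemma cont_in_affine c k a b : cont_in (fun s => c + k * s) a b.
Proof.
  intros t Ht e He.
  assert (Hk : 0 < Rabs k + 1) by (pose proof (Rabs_pos k); lra).
  exists (e / (Rabs k + 1)). split; [apply Rdiv_lt_0_compat; lra|].
  intros s Hs Hst.
  replace (c + k * s - (c + k * t)) with (k * (s - t)) by ring.
  rewrite Rabs_mult.
  apply Rle_lt_trans with ((Rabs k + 1) * Rabs (s - t)).
  { apply Rmult_le_compat_r; [apply Rabs_pos|lra]. }
  replace e with ((Rabs k + 1) * (e / (Rabs k + 1))) by (field; lra).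
  apply Rmult_lt_compat_l; auto.
Qed.

Lemma cont_in_ext f g a b :
  (forall x, a <= x <= b -> g x = f x) -> cont_in f a b -> cont_in g a b.
Proof.
  intros E Hf t Ht e He. destruct (Hf t Ht e He) as [d [Hd H]].
  exists d; split; auto. intros s Hs Hst. rewrite !E; auto.
Qed.

Lemma cont_in_opp f a b : cont_in f a b -> cont_in (fun x => - f x) a b.
Proof.
  intros Hf t Ht e He. destruct (Hf t Ht e He) as [d [Hd H]].
  exists d; split; auto. intros s Hs Hst.
  replace (- f s - - f t) with (- (f s - f t)) by ring. rewrite Rabs_Ropp. auto.
Qed.

Lemma cont_in_plus_const f c a b : cont_in f a b -> cont_in (fun x => f x + c) a b.
Proof.
  intros Hf t Ht e He. destruct (Hf t Ht e He) as [d [Hd H]].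
  exists d; split; auto. intros s Hs Hst.
  replace (f s + c - (f t + c)) with (f s - f t) by ring. auto.
Qed.

Lemma cont_in_mult f g a b :
  cont_in f a b -> cont_in g a b -> cont_in (fun x => f x * g x) a b.
Proof.
  assert (Hlim : forall h, cont_in h a b -> forall t, a <= t <= b ->
    limit1_in h (fun s => a <= s <= b) (h t) t).
  { intros h Hh t Ht e He. destruct (Hh t Ht e He) as [d [Hd H]].
    exists d; split; auto. intros x [Hx Hxt]. apply H; auto. }
  intros Hf Hg t Ht e He.
  destruct (limit_mul f g _ (f t) (g t) t (Hlim f Hf t Ht) (Hlim g Hg t Ht) e He)
    as [d [Hd H]].
  exists d; split; auto. intros s Hs Hst. apply (H s). split; auto.
Qed.

Lemma cont_in_comp g f a b :
  (forall x, continuity_pt g x) -> cont_in f a b -> cont_in (fun x => g (f x)) a b.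
Proof.
  intros Hg Hf t Ht e He.
  destruct (Hg (f t) e He) as [d1 [Hd1 H1]].
  destruct (Hf t Ht d1 Hd1) as [d [Hd H2]].
  exists d; split; auto. intros s Hs Hst.
  destruct (Req_dec (f t) (f s)) as [E|E].
  - rewrite E, Rminus_diag, Rabs_R0. auto.
  - apply (H1 (f s)). split; [split; [exact I|exact E]|apply H2; auto].
Qed.

Lemma cont_in_comp_in F h A B a b :
  cont_in F A B -> cont_in h a b -> (forall s, a <= s <= b -> A <= h s <= B) ->
  cont_in (fun s => F (h s)) a b.
Proof.
  intros HF Hh Hr t Ht e He.
  destruct (HF (h t) (Hr t Ht) e He) as [d1 [Hd1 H1]].
  destruct (Hh t Ht d1 Hd1) as [d [Hd H2]].
  exists d; split; [exact Hd|]. intros s Hs Hst. apply H1; auto.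
Qed.

Lemma cont_in_union f a m b : a <= m <= b ->
  cont_in f a m -> cont_in f m b -> cont_in f a b.
Proof.
  intros Hm Hl Hr t Ht e He.
  destruct (Rlt_le_dec t m) as [Htm|Hmt].
  - destruct (Hl t ltac:(lra) e He) as [d [Hd H]].
    exists (Rmin d (m - t)). split; [apply Rmin_pos; lra|].
    intros s Hs Hst. pose proof (Rmin_l d (m - t)). pose proof (Rmin_r d (m - t)).
    apply Rabs_def2 in Hst. apply H; [lra|apply Rabs_def1; lra].
  - destruct (Hr t ltac:(lra) e He) as [d2 [Hd2 H2]].
    destruct (Rle_lt_or_eq_dec m t Hmt) as [Hlt|<-].
    + exists (Rmin d2 (t - m)). split; [apply Rmin_pos; lra|].
      intros s Hs Hst. pose proof (Rmin_l d2 (t - m)). pose proof (Rmin_r d2 (t - m)).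
      apply Rabs_def2 in Hst. apply H2; [lra|apply Rabs_def1; lra].
    + destruct (Hl m ltac:(lra) e He) as [d1 [Hd1 H1]].
      exists (Rmin d1 d2). split; [apply Rmin_pos; lra|].
      intros s Hs Hst. pose proof (Rmin_l d1 d2). pose proof (Rmin_r d1 d2).
      destruct (Rle_dec s m); [apply H1|apply H2]; auto; lra.
Qed.

Lemma cont_in_glue f g a m b : a <= m <= b ->
  cont_in f a m -> cont_in g m b -> f m = g m ->
  cont_in (fun s => if Rle_dec s m then f s else g s) a b.
Proof.
  intros Hm Hf Hg Efg. apply (cont_in_union _ a m b Hm).
  - apply (cont_in_ext f); auto. intros x Hx. destruct (Rle_dec x m); [auto|lra].
  - apply (cont_in_ext g); auto. intros x Hx.
    destruct (Rle_dec x m); [replace x with m by lra; auto|auto].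
Qed.

Lemma last_below f a b s c : cont_in f a b -> a <= s <= b -> f a <= c ->
  exists r, a <= r <= s /\ f r <= c /\ forall t, r < t <= s -> c < f t.
Proof.
  intros Hf Hs Ha.
  set (E := fun t => a <= t <= s /\ f t <= c).
  assert (Hb : bound E) by (exists s; intros x [Hx _]; lra).
  assert (He : exists x, E x) by (exists a; split; [lra|auto]).
  destruct (completeness E Hb He) as [r [Hub Hlub]].
  assert (Har : a <= r) by (apply Hub; split; [lra|auto]).
  assert (Hrs : r <= s) by (apply Hlub; intros x [Hx _]; lra).
  exists r. split; [lra|]. split.
  - apply Rnot_lt_le. intro Hc.
    destruct (Hf r ltac:(lra) (f r - c) ltac:(lra)) as [d [Hd H]].
    assert (r <= r - d / 2); [|lra].
    apply Hlub. intros x [Hx Hfx]. apply Rnot_lt_le. intro Hx2.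
    assert (x <= r) by (apply Hub; split; auto).
    assert (K : Rabs (f x - f r) < f r - c) by (apply H; [lra|apply Rabs_def1; lra]).
    apply Rabs_def2 in K. lra.
  - intros t Ht. apply Rnot_le_lt. intro Hft.
    assert (t <= r) by (apply Hub; split; [lra|auto]). lra.
Qed.

Lemma last_at_level f a b s c : cont_in f a b -> a <= s <= b -> f a <= c -> c <= f s ->
  exists r, a <= r <= s /\ f r = c /\ forall t, r < t <= s -> c < f t.
Proof.
  intros Hf Hs Ha Hc.
  destruct (last_below f a b s c Hf Hs Ha) as [r [Hr [Hfr Hgt]]].
  exists r. split; auto. split; auto.
  destruct (Req_dec r s) as [->|Hrs]; [lra|].
  apply Rle_antisym; auto. apply Rnot_lt_le. intro Hlt.
  destruct (Hf r ltac:(lra) (c - f r) ltac:(lra)) as [d [Hd H]].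
  set (t := Rmin (r + d / 2) s).
  assert (t <= r + d / 2) by apply Rmin_l.
  assert (t <= s) by apply Rmin_r.
  assert (r < t) by (apply Rmin_glb_lt; lra).
  assert (K : Rabs (f t - f r) < c - f r) by (apply H; [lra|apply Rabs_def1; lra]).
  apply Rabs_def2 in K. specialize (Hgt t ltac:(lra)). lra.
Qed.

Lemma IVT_down f a b c : cont_in f a b -> a <= b -> f b <= c <= f a ->
  exists t, a <= t <= b /\ f t = c.
Proof.
  intros Hf Hab Hc.
  destruct (last_at_level (fun x => - f x) a b b (- c) (cont_in_opp f a b Hf))
    as [t [Ht [Et _]]]; try lra.
  exists t. split; lra.
Qed.

Definition loc_decr (f : R -> R) (a b t : R) : Prop :=
  exists d, 0 < d /\ forall s, a <= s <= b ->
    (t < s < t + d -> f s < f t) /\ (t - d < s < t -> f t < f s).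

Lemma loc_decr_subinterval f a b a' b' t :
  loc_decr f a b t -> a <= a' -> b' <= b -> loc_decr f a' b' t.
Proof. intros [d [Hd H]] Ha Hb. exists d. split; auto. intros s Hs. apply H. lra. Qed.

Lemma loc_decr_shift f g c a b t : (forall x, g x = f x + c) ->
  loc_decr f a b t -> loc_decr g a b t.
Proof.
  intros E [d [Hd H]]. exists d. split; auto. intros s Hs. rewrite !E.
  destruct (H s Hs) as [H1 H2]. split; intro; [specialize (H1 H0)|specialize (H2 H0)]; lra.
Qed.

Lemma level_crossed_once f a b c : cont_in f a b ->
  (forall t, a <= t <= b -> f t = c -> loc_decr f a b t) ->
  forall s s', a <= s -> s < s' <= b -> f s <= c -> f s' < c.
Proof.
  intros Hf Hloc s s' Has Hss' Hs.
  assert (Strict : forall u, s < u <= b -> ~ c < f u).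
  { intros u Hu Hfu.
    destruct (last_at_level f s b u c) as [r [Hr [Hfr Hgt]]]; try lra.
    { apply (cont_in_subinterval f a b); auto; lra. }
    assert (Hru : r < u) by (destruct (Req_dec r u); [subst; lra|lra]).
    destruct (Hloc r ltac:(lra) Hfr) as [d [Hd H]].
    set (t := Rmin (r + d / 2) u).
    assert (t <= r + d / 2) by apply Rmin_l.
    assert (t <= u) by apply Rmin_r.
    assert (r < t) by (apply Rmin_glb_lt; lra).
    destruct (H t ltac:(lra)) as [K _]. specialize (K ltac:(lra)).
    specialize (Hgt t ltac:(lra)). lra. }
  apply Rnot_le_lt. intro Hcs'.
  destruct (Rle_lt_or_eq_dec c (f s') Hcs') as [Hlt|Heq]; [exact (Strict s' ltac:(lra) Hlt)|].
  destruct (Hloc s' ltac:(lra) (eq_sym Heq)) as [d [Hd H]].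
  set (t := Rmax s (s' - d / 2)).
  assert (s <= t) by apply Rmax_l.
  assert (s' - d / 2 <= t) by apply Rmax_r.
  assert (t < s') by (apply Rmax_lub_lt; lra).
  destruct (H t ltac:(lra)) as [_ K]. specialize (K ltac:(lra)).
  destruct (Req_dec t s) as [E|E]; [rewrite E in K; lra|].
  apply (Strict t); lra.
Qed.

Lemma inv_succ_pos (n : nat) : 0 < / (INR n + 1).
Proof. apply Rinv_0_lt_compat. pose proof (pos_INR n). lra. Qed.

Lemma inv_succ_eventually_lt eta : 0 < eta ->
  exists N : nat, forall n, (N <= n)%nat -> / (INR n + 1) < eta.
Proof.
  intros He. destruct (archimed_cor1 eta He) as [N [HN HN0]].
  exists N. intros n Hn.
  apply Rle_lt_trans with (/ INR N); auto.
  apply Rinv_le_contravar; [apply lt_0_INR; auto|].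
  apply le_INR in Hn. lra.
Qed.

Lemma accumulation_level_sublevel f g p q a c (s : nat -> R) :
  cont_in f p q -> cont_in g p q -> (forall n, p <= s n <= q) ->
  (forall n, Rabs (f (s n) - a) < / (INR n + 1)) ->
  (forall n, g (s n) <= c + / (INR n + 1)) ->
  exists l, p <= l <= q /\ f l = a /\ g l <= c.
Proof.
  intros Hf Hg Hs Ha Hc.
  destruct (Bolzano_Weierstrass s (fun x => p <= x <= q) (compact_P3 p q) Hs) as [l Hl].
  assert (Close : forall d, 0 < d -> forall N, exists n, (N <= n)%nat /\ Rabs (s n - l) < d).
  { intros d Hd N. destruct (Hl (disc l (mkposreal d Hd)) N) as [n [Hn Hv]].
    - exists (mkposreal d Hd). intros x Hx; exact Hx.
    - exists n; split; auto. }
  assert (Hlpq : p <= l <= q).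
  { split; apply Rnot_lt_le; intro Hout.
    - destruct (Close (p - l) ltac:(lra) 0%nat) as [n [_ Hn]].
      apply Rabs_def2 in Hn. specialize (Hs n). lra.
    - destruct (Close (l - q) ltac:(lra) 0%nat) as [n [_ Hn]].
      apply Rabs_def2 in Hn. specialize (Hs n). lra. }
  exists l. split; auto. split.
  - apply NNPP. intro Hne.
    set (eta := Rabs (f l - a)).
    assert (Heta : 0 < eta) by (apply Rabs_pos_lt; lra).
    destruct (Hf l Hlpq (eta / 2) ltac:(lra)) as [d [Hd H]].
    destruct (inv_succ_eventually_lt (eta / 2) ltac:(lra)) as [N HN].
    destruct (Close d Hd N) as [n [Hn Hsn]].
    specialize (H (s n) (Hs n) Hsn). specialize (HN n Hn). specialize (Ha n).
    assert (eta <= Rabs (f (s n) - f l) + Rabs (f (s n) - a)); [|lra].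
    unfold eta. replace (f l - a) with (- (f (s n) - f l) + (f (s n) - a)) by ring.
    eapply Rle_trans; [apply Rabs_triang|]. rewrite Rabs_Ropp. lra.
  - apply Rnot_lt_le. intro Hlt.
    set (eta := g l - c).
    destruct (Hg l Hlpq (eta / 2) ltac:(unfold eta; lra)) as [d [Hd H]].
    destruct (inv_succ_eventually_lt (eta / 2) ltac:(unfold eta; lra)) as [N HN].
    destruct (Close d Hd N) as [n [Hn Hsn]].
    specialize (H (s n) (Hs n) Hsn). specialize (HN n Hn). specialize (Hc n).
    apply Rabs_def2 in H. unfold eta in *. lra.
Qed.

(* [omega_det u th] is [x0 x2 - x1^2] at [Psph u th] divided by [cos th ^ 2],
   so [Omega] is where it is positive. *)
Definition omega_det (u th : R) : R := cos u * tan th - sin u ^ 2.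

Lemma omega_det_cos0 u th : cos u = 0 -> omega_det u th = -1.
Proof.
  intro H. unfold omega_det. pose proof (sin2_cos2 u). rewrite H in *. unfold Rsqr in *. nra.
Qed.

Lemma omega_det_shift u th : omega_det (u + PI) (- th) = omega_det u th.
Proof. unfold omega_det. rewrite neg_cos, neg_sin, tan_neg. ring. Qed.

Lemma omega_det_le_compat u th th' : 0 <= cos u ->
  - (PI / 2) < th -> th <= th' -> th' < PI / 2 -> omega_det u th <= omega_det u th'.
Proof.
  intros Hc H1 H2 H3. unfold omega_det. apply Rplus_le_compat_r, Rmult_le_compat_l; auto.
  destruct (Req_dec th th') as [<-|E]; [lra|].
  left. apply tan_increasing; lra.
Qed.

Lemma omega_det_lt_compat u th th' : 0 < cos u ->
  - (PI / 2) < th -> th < th' -> th' < PI / 2 -> omega_det u th < omega_det u th'.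
Proof.
  intros Hc H1 H2 H3. unfold omega_det. apply Rplus_lt_compat_r, Rmult_lt_compat_l; auto.
  apply tan_increasing; lra.
Qed.

Lemma lt_of_omega_det_lt u th th' : 0 < cos u ->
  - (PI / 2) < th < PI / 2 -> - (PI / 2) < th' < PI / 2 ->
  omega_det u th < omega_det u th' -> th < th'.
Proof.
  intros Hc Hth Hth' Hlt. apply Rnot_le_lt. intro Hle.
  pose proof (omega_det_le_compat u th' th ltac:(lra)). lra.
Qed.

Lemma Psph_InS2 u th : InS2 (Psph u th).
Proof.
  unfold InS2, sqnorm3, Psph.
  pose proof (sin2_cos2 u). pose proof (sin2_cos2 th). unfold Rsqr in *. nra.
Qed.

Lemma Psph_not_InOmega u th : cos th <> 0 -> omega_det u th <= 0 -> ~ InOmega (Psph u th).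
Proof.
  intros Hc HD [_ HO]. unfold Psph in HO. unfold omega_det, tan in HD.
  assert (E : cos th * cos u * sin th - (cos th * sin u) ^ 2 =
     cos th * cos th * (cos u * (sin th / cos th) - sin u ^ 2)) by (field; auto).
  rewrite E in HO. assert (0 < cos th * cos th) by (apply Rsqr_pos_lt in Hc; exact Hc).
  nra.
Qed.

Lemma cos_sin_PI2_period k : cos (PI / 2 + 2 * PI * IZR k) = 0 /\ sin (PI / 2 + 2 * PI * IZR k) = 1.
Proof.
  destruct (Z.le_ge_cases 0 k) as [Hk|Hk].
  - destruct (Z_of_nat_complete k Hk) as [n ->]. rewrite <- INR_IZR_INZ.
    replace (PI / 2 + 2 * PI * INR n) with (PI / 2 + 2 * INR n * PI) by ring.
    rewrite cos_period, sin_period, cos_PI2, sin_PI2. auto.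
  - destruct (Z_of_nat_complete (- k) ltac:(lia)) as [n Hn].
    assert (E : IZR k = - INR n) by (rewrite INR_IZR_INZ, <- Hn, opp_IZR; ring).
    rewrite E, <- (cos_period _ n), <- (sin_period _ n).
    replace (PI / 2 + 2 * PI * - INR n + 2 * INR n * PI) with (PI / 2) by ring.
    rewrite cos_PI2, sin_PI2. auto.
Qed.

Lemma sin_sign_small x : Rabs x < PI -> (0 < sin x -> 0 < x) /\ (sin x < 0 -> x < 0).
Proof.
  intros Hx. apply Rabs_def2 in Hx. split; intro Hs; apply Rnot_le_lt; intro Hle.
  - destruct Hle as [Hlt|E].
    + pose proof (sin_lt_0_var x ltac:(lra) Hlt). lra.
    + rewrite E, sin_0 in Hs. lra.
  - pose proof (sin_ge_0 x Hle ltac:(lra)). lra.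
Qed.

Lemma deriv_neg_loc_decr g t l : derivable_pt_lim g t l -> l < 0 ->
  exists d, 0 < d /\ forall s, (t < s < t + d -> g s < g t) /\ (t - d < s < t -> g t < g s).
Proof.
  intros H Hl. destruct (H (- l) ltac:(lra)) as [d Hd]. exists d. split; [apply cond_pos|].
  intros s.
  assert (K : s <> t -> Rabs (s - t) < d -> (g s - g t) / (s - t) < 0).
  { intros Hst Hab. specialize (Hd (s - t) ltac:(lra) Hab).
    replace (t + (s - t)) with s in Hd by ring. apply Rabs_def2 in Hd. lra. }
  assert (E : s <> t -> g s - g t = (g s - g t) / (s - t) * (s - t)) by (intro; field; lra).
  split; intros Hs;
    specialize (K ltac:(lra) ltac:(apply Rabs_def1; lra)); specialize (E ltac:(lra)); nra.
Qed.

Lemma loc_decr_of_deriv f g a b t l : derivable_pt_lim g t l -> l < 0 -> g t = 0 ->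
  (exists d, 0 < d /\ forall s, a <= s <= b -> Rabs (s - t) < d ->
     (0 < g s -> f t < f s) /\ (g s < 0 -> f s < f t)) ->
  loc_decr f a b t.
Proof.
  intros Hg Hl Hg0 [d2 [Hd2 Hsgn]].
  destruct (deriv_neg_loc_decr g t l Hg Hl) as [d1 [Hd1 Hdec]].
  exists (Rmin d1 d2). split; [apply Rmin_pos; auto|].
  intros s Hs. pose proof (Rmin_l d1 d2). pose proof (Rmin_r d1 d2).
  destruct (Hdec s) as [K1 K2].
  split; intro Hst; apply (Hsgn s Hs (ltac:(apply Rabs_def1; lra))); lra.
Qed.

Lemma kappa_Psph_coords y dy ddy u th t :
  kappa y dy ddy t <> north_pole -> kappa y dy ddy t <> south_pole ->
  - (PI / 2) <= th <= PI / 2 -> kappa y dy ddy t = Psph u th ->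
  - (PI / 2) < th < PI / 2 /\ exists n, 0 < n /\
    y t = n * cos th * cos u /\ dy t = n * cos th * sin u /\ ddy t = n * sin th.
Proof.
  intros Hn Hs Hth Hk.
  assert (Hstrict : - (PI / 2) < th < PI / 2).
  { split; apply Rnot_le_lt; intro E.
    - apply Hs. rewrite Hk. replace th with (- (PI / 2)) by lra.
      unfold Psph, south_pole. rewrite cos_neg, sin_neg, cos_PI2, sin_PI2. f_equal; try f_equal; ring.
    - apply Hn. rewrite Hk. replace th with (PI / 2) by lra.
      unfold Psph, north_pole. rewrite cos_PI2, sin_PI2. f_equal; try f_equal; ring. }
  split; auto.
  pose proof (Psph_InS2 u th) as Hnorm.
  unfold kappa, Psph in Hk. set (n := norm3 (y t, dy t, ddy t)) in Hk.
  injection Hk as E1 E2 E3.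
  assert (Hnp : 0 < n).
  { destruct (sqrt_pos (sqnorm3 (y t, dy t, ddy t))) as [|E]; auto. exfalso.
    unfold n, norm3 in *. rewrite <- E in *. unfold Rdiv in *. rewrite Rinv_0 in *.
    unfold InS2, sqnorm3, Psph in Hnorm. rewrite <- E1, <- E2, <- E3 in Hnorm. lra. }
  exists n. split; auto.
  split; [|split].
  - rewrite Rmult_assoc, <- E1. field. lra.
  - rewrite Rmult_assoc, <- E2. field. lra.
  - rewrite <- E3. field. lra.
Qed.

Section Frame_longitude.

Variables (y dy ddy phi theta : R -> R) (t0 t1 : R).
Hypothesis t0_pos : 0 < t0.
Hypothesis y_deriv : forall t, 0 < t -> is_derive y t (dy t).
Hypothesis dy_deriv : forall t, 0 < t -> is_derive dy t (ddy t).
Hypothesis no_pole : forall t, t0 <= t <= t1 ->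
  kappa y dy ddy t <> north_pole /\ kappa y dy ddy t <> south_pole.
Hypothesis theta_range : forall t, t0 <= t <= t1 -> - (PI / 2) <= theta t <= PI / 2.
Hypothesis kappa_rep : forall t, t0 <= t <= t1 -> kappa y dy ddy t = Psph (phi t) (theta t).
Hypothesis phi_cont : cont_in phi t0 t1.

Lemma theta_strict_range t : t0 <= t <= t1 -> - (PI / 2) < theta t < PI / 2.
Proof.
  intro Ht. destruct (no_pole t Ht) as [Hn Hs].
  exact (proj1 (kappa_Psph_coords y dy ddy _ _ t Hn Hs (theta_range t Ht) (kappa_rep t Ht))).
Qed.

Lemma frame_coords s : t0 <= s <= t1 -> 0 < cos (theta s) /\ exists n, 0 < n /\
  y s = n * cos (theta s) * cos (phi s) /\ dy s = n * cos (theta s) * sin (phi s) /\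
  ddy s = n * sin (theta s).
Proof.
  intros Hs. destruct (no_pole s Hs) as [Hn Hp].
  destruct (kappa_Psph_coords y dy ddy _ _ s Hn Hp (theta_range s Hs) (kappa_rep s Hs))
    as [Hr Hc]. split; [apply cos_gt_0; lra|exact Hc].
Qed.

Lemma phi_loc_monotone t : t0 <= t <= t1 ->
  (omega_det (phi t) (theta t) < 0 -> loc_decr phi t0 t1 t) /\
  (0 < omega_det (phi t) (theta t) -> loc_decr (fun x => - phi x) t0 t1 t).
Proof.
  intros Ht.
  set (N := fun s => y t * dy s - dy t * y s).
  destruct (frame_coords t Ht) as [Hct [n [Hn [Ey [Edy Eddy]]]]].
  assert (HN : derivable_pt_lim N t (n * n * cos (theta t) ^ 2 * omega_det (phi t) (theta t))).
  { replace (n * n * cos (theta t) ^ 2 * omega_det (phi t) (theta t))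
      with (y t * ddy t - dy t * dy t)
      by (rewrite Ey, Edy, Eddy; unfold omega_det, tan; field; lra).
    apply (derivable_pt_lim_minus (mult_real_fct (y t) dy) (mult_real_fct (dy t) y));
      apply derivable_pt_lim_scal, is_derive_Reals; [apply dy_deriv|apply y_deriv]; lra. }
  assert (HK : 0 < n * n * cos (theta t) ^ 2) by (apply Rmult_lt_0_compat; nra).
  assert (Sign : exists d, 0 < d /\ forall s, t0 <= s <= t1 -> Rabs (s - t) < d ->
     (0 < N s -> phi t < phi s) /\ (N s < 0 -> phi s < phi t)).
  { destruct (phi_cont t Ht PI PI_RGT_0) as [d [Hd Hclose]].
    exists d. split; auto. intros s Hs Hst.
    destruct (frame_coords s Hs) as [Hcs [ns [Hns [Eys [Edys _]]]]].
    assert (EN : N s = ns * n * cos (theta s) * cos (theta t) * sin (phi s - phi t)).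
    { unfold N. rewrite sin_minus, Ey, Edy, Eys, Edys. ring. }
    assert (Hpos : 0 < ns * n * cos (theta s) * cos (theta t))
      by (repeat apply Rmult_lt_0_compat; auto).
    destruct (sin_sign_small _ (Hclose s Hs Hst)) as [S1 S2].
    split; intro HNs; rewrite EN in HNs;
      [pose proof (S1 ltac:(nra))|pose proof (S2 ltac:(nra))]; lra. }
  assert (HN0 : N t = 0) by (unfold N; ring).
  split; intro HD.
  - apply (loc_decr_of_deriv phi N t0 t1 t _ HN); auto. nra.
  - apply (loc_decr_of_deriv (fun x => - phi x) (opp_fct N) t0 t1 t _
      (derivable_pt_lim_opp _ _ _ HN)).
    + nra.
    + unfold opp_fct. rewrite HN0. ring.
    + destruct Sign as [d [Hd Hsgn]]. exists d. split; auto. intros s Hs Hst.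
      unfold opp_fct. destruct (Hsgn s Hs Hst). split; intro; lra.
Qed.

End Frame_longitude.

Lemma continuity_pt_pos_nbhd f x : continuity_pt f x -> 0 < f x ->
  exists d, 0 < d /\ forall x', Rabs (x' - x) < d -> 0 < f x'.
Proof.
  intros Hf Hpos. destruct (Hf (f x) Hpos) as [d [Hd H]]. exists d. split; auto.
  intros x' Hx'. destruct (Req_dec x x') as [<-|E]; auto.
  assert (K : Rabs (f x' - f x) < f x) by (apply (H x'); split; [split; [exact I|exact E]|exact Hx']).
  apply Rabs_def2 in K. lra.
Qed.

Section Branch.

Variables (phi theta : R -> R) (p q w : R).
Hypothesis p_le_q : p <= q.
Hypothesis phi_cont : cont_in phi p q.
Hypothesis theta_cont : cont_in theta p q.
Hypothesis cos_w : cos w = 0.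
Hypothesis sin_w : sin w = 1.
Hypothesis theta_range : forall t, p <= t <= q -> - (PI / 2) < theta t < PI / 2.
Hypothesis phi_range : forall t, p <= t <= q -> w - PI <= phi t <= w.
Hypothesis phi_p : phi p = w.
Hypothesis phi_q : phi q = w - PI.
Hypothesis phi_loc : forall t, p <= t <= q ->
  (omega_det (phi t) (theta t) < 0 -> loc_decr phi p q t) /\
  (0 < omega_det (phi t) (theta t) -> loc_decr (fun x => - phi x) p q t).

Lemma cos_branch_nonneg u : w - PI <= u <= w -> 0 <= cos u.
Proof.
  intros Hu. replace u with (w - (w - u)) by ring.
  rewrite cos_minus, cos_w, sin_w, Rmult_0_l, Rplus_0_l, Rmult_1_l.
  apply sin_ge_0; lra.
Qed.

Lemma cos_w_minus_PI : cos (w - PI) = 0.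
Proof. rewrite cos_minus, cos_w, sin_w, sin_PI. ring. Qed.

Lemma p_lt_q : p < q.
Proof.
  destruct (Req_dec p q) as [E|E]; [|lra].
  rewrite E, phi_q in phi_p. pose proof PI_RGT_0. lra.
Qed.

Lemma exists_nonpos_hit u : w - PI <= u <= w ->
  exists t, p <= t <= q /\ phi t = u /\ omega_det u (theta t) <= 0.
Proof.
  intros Hu. apply NNPP. intro Hnone.
  destruct (Req_dec u w) as [E|E].
  { apply Hnone. exists p. pose proof p_lt_q. rewrite E, omega_det_cos0; auto. split; lra. }
  assert (Up : forall t, p <= t <= q -> - phi t = - u -> loc_decr (fun x => - phi x) p q t).
  { intros t Ht Et. apply (phi_loc t Ht). apply Rnot_le_lt. intro HD.
    apply Hnone. exists t. split; auto. split; [lra|]. replace u with (phi t) by lra. auto. }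
  pose proof (level_crossed_once (fun x => - phi x) p q (- u) (cont_in_opp _ _ _ phi_cont) Up
    p q (Rle_refl p) ltac:(pose proof p_lt_q; lra) ltac:(lra)).
  lra.
Qed.

Lemma exists_lowest_hit u : w - PI <= u <= w ->
  exists t, p <= t <= q /\ phi t = u /\
    forall t', p <= t' <= q -> phi t' = u -> theta t <= theta t'.
Proof.
  intros Hu. destruct (exists_nonpos_hit u Hu) as [t0 [Ht0 [Ht0u _]]].
  set (E := fun x => exists t, p <= t <= q /\ phi t = u /\ x = - theta t).
  assert (Hbd : bound E).
  { exists (PI / 2). intros x [t [Ht [_ ->]]]. specialize (theta_range t Ht). lra. }
  destruct (completeness E Hbd (ex_intro _ (- theta t0) (ex_intro _ t0 (conj Ht0 (conj Ht0u eq_refl)))))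
    as [M [Hub Hlub]].
  assert (Near : forall n : nat, exists t, p <= t <= q /\ phi t = u /\ M - / (INR n + 1) < - theta t).
  { intro n. apply NNPP. intro Hno. pose proof (inv_succ_pos n).
    assert (M <= M - / (INR n + 1)); [|lra].
    apply Hlub. intros x [t [Ht [Htu ->]]]. apply Rnot_lt_le. intro Hlt.
    apply Hno. exists t. auto. }
  set (s := fun n : nat => epsilon (inhabits 0)
    (fun t => p <= t <= q /\ phi t = u /\ M - / (INR n + 1) < - theta t)).
  assert (Hs : forall n, p <= s n <= q /\ phi (s n) = u /\ M - / (INR n + 1) < - theta (s n))
    by (intro n; apply epsilon_spec, Near).
  destruct (accumulation_level_sublevel phi theta p q u (- M) s phi_cont theta_cont)
    as [l [Hl [Hlu Hlm]]].
  - intro n. apply Hs.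
  - intro n. rewrite (proj1 (proj2 (Hs n))), Rminus_diag, Rabs_R0. apply inv_succ_pos.
  - intro n. pose proof (proj2 (proj2 (Hs n))). lra.
  - exists l. split; auto. split; auto. intros t' Ht' Et'.
    assert (- theta t' <= M) by (apply Hub; exists t'; auto). lra.
Qed.

Definition lowest_hit (u : R) : R :=
  epsilon (inhabits 0) (fun t => p <= t <= q /\ phi t = u /\
    forall t', p <= t' <= q -> phi t' = u -> theta t <= theta t').

Lemma lowest_hit_spec u : w - PI <= u <= w ->
  p <= lowest_hit u <= q /\ phi (lowest_hit u) = u /\
  (forall t', p <= t' <= q -> phi t' = u -> theta (lowest_hit u) <= theta t') /\
  omega_det u (theta (lowest_hit u)) <= 0.
Proof.
  intros Hu.
  destruct (epsilon_spec (inhabits 0) _ (exists_lowest_hit u Hu)) as [A1 [A2 A3]].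
  fold (lowest_hit u) in A1, A2, A3.
  split; auto. split; auto. split; auto.
  destruct (exists_nonpos_hit u Hu) as [t' [Ht' [Et' Dt']]].
  apply Rle_trans with (omega_det u (theta t')); auto.
  apply omega_det_le_compat; [apply cos_branch_nonneg; auto|apply theta_range; auto|auto|].
  apply theta_range; auto.
Qed.

Lemma lowest_hit_w : lowest_hit w = p.
Proof.
  pose proof PI_RGT_0.
  destruct (lowest_hit_spec w ltac:(lra)) as [Ht [Et _]].
  set (t := lowest_hit w) in *.
  destruct (Req_dec t p) as [E|E]; auto. exfalso.
  destruct (proj1 (phi_loc t Ht)) as [d [Hd K]]; [rewrite Et, omega_det_cos0; auto; lra|].
  set (s := Rmax p (t - d / 2)).
  assert (p <= s) by apply Rmax_l.
  assert (t - d / 2 <= s) by apply Rmax_r.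
  assert (s < t) by (apply Rmax_lub_lt; lra).
  pose proof (proj2 (K s ltac:(lra)) ltac:(lra)). pose proof (phi_range s ltac:(lra)). lra.
Qed.

Lemma lowest_hit_w_minus_PI : lowest_hit (w - PI) = q.
Proof.
  pose proof PI_RGT_0.
  destruct (lowest_hit_spec (w - PI) ltac:(lra)) as [Ht [Et _]].
  set (t := lowest_hit (w - PI)) in *.
  destruct (Req_dec t q) as [E|E]; auto. exfalso.
  destruct (proj1 (phi_loc t Ht)) as [d [Hd K]];
    [rewrite Et, omega_det_cos0; [lra|apply cos_w_minus_PI]|].
  set (s := Rmin q (t + d / 2)).
  assert (s <= q) by apply Rmin_l.
  assert (s <= t + d / 2) by apply Rmin_r.
  assert (t < s) by (apply Rmin_glb_lt; lra).
  pose proof (proj1 (K s ltac:(lra)) ltac:(lra)). pose proof (phi_range s ltac:(lra)). lra.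
Qed.

Lemma theta_lowest_hit_lsc u0 : w - PI <= u0 <= w -> forall e, 0 < e -> exists d, 0 < d /\
  forall u, w - PI <= u <= w -> Rabs (u - u0) < d ->
    theta (lowest_hit u0) - e < theta (lowest_hit u).
Proof.
  intros Hu0 e He. apply NNPP. intro Hno.
  set (Th := fun u => theta (lowest_hit u)).
  assert (Far : forall n : nat, exists u, w - PI <= u <= w /\
      Rabs (u - u0) < / (INR n + 1) /\ Th u <= Th u0 - e).
  { intro n. apply NNPP. intro Hn. apply Hno. exists (/ (INR n + 1)).
    split; [apply inv_succ_pos|].
    intros u Hu Hd. apply Rnot_le_lt. intro Hle. apply Hn. exists u. auto. }
  set (un := fun n : nat => epsilon (inhabits 0) (fun u => w - PI <= u <= w /\
      Rabs (u - u0) < / (INR n + 1) /\ Th u <= Th u0 - e)).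
  assert (Hun : forall n, w - PI <= un n <= w /\ Rabs (un n - u0) < / (INR n + 1) /\
      Th (un n) <= Th u0 - e) by (intro n; apply epsilon_spec, Far).
  assert (Hs : forall n, p <= lowest_hit (un n) <= q /\ phi (lowest_hit (un n)) = un n)
    by (intro n; destruct (lowest_hit_spec (un n) (proj1 (Hun n))) as [A [B _]]; auto).
  destruct (lowest_hit_spec u0 Hu0) as [_ [_ [Hmin _]]].
  destruct (accumulation_level_sublevel phi theta p q u0 (Th u0 - e)
    (fun n => lowest_hit (un n)) phi_cont theta_cont) as [l [Hl [Hlu Hlm]]].
  - intro n. apply Hs.
  - intro n. rewrite (proj2 (Hs n)). apply Hun.
  - intro n. pose proof (proj2 (proj2 (Hun n))). pose proof (inv_succ_pos n). unfold Th in *. lra.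
  - specialize (Hmin l Hl Hlu). unfold Th in Hlm. lra.
Qed.

Lemma hit_right_of_decrease ts : p <= ts <= q -> loc_decr phi p q ts ->
  forall r, 0 < r -> exists d, 0 < d /\ forall u, w - PI <= u <= phi ts -> phi ts - u < d ->
    exists s, ts <= s <= q /\ s - ts < r /\ phi s = u.
Proof.
  intros Hts [d0 [Hd0 K]] r Hr.
  destruct (Req_dec ts q) as [E|E].
  { exists 1. split; [lra|]. intros u Hu _. exists ts. rewrite E, phi_q in *. split; lra. }
  set (sp := Rmin (ts + Rmin r d0 / 2) q).
  pose proof (Rmin_pos r d0 Hr Hd0). pose proof (Rmin_l r d0). pose proof (Rmin_r r d0).
  assert (sp <= ts + Rmin r d0 / 2) by apply Rmin_l.
  assert (sp <= q) by apply Rmin_r.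
  assert (ts < sp) by (apply Rmin_glb_lt; lra).
  pose proof (proj1 (K sp ltac:(lra)) ltac:(lra)).
  exists (phi ts - phi sp). split; [lra|]. intros u Hu Hlt.
  destruct (IVT_down phi ts sp u) as [s [Hs Es]]; try lra.
  - apply (cont_in_subinterval phi p q); auto; lra.
  - exists s. split; [lra|]. split; [lra|auto].
Qed.

Lemma hit_left_of_decrease ts : p <= ts <= q -> loc_decr phi p q ts ->
  forall r, 0 < r -> exists d, 0 < d /\ forall u, phi ts <= u <= w -> u - phi ts < d ->
    exists s, p <= s <= ts /\ ts - s < r /\ phi s = u.
Proof.
  intros Hts [d0 [Hd0 K]] r Hr.
  destruct (Req_dec ts p) as [E|E].
  { exists 1. split; [lra|]. intros u Hu _. exists ts. rewrite E, phi_p in *. split; lra. }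
  set (sm := Rmax (ts - Rmin r d0 / 2) p).
  pose proof (Rmin_pos r d0 Hr Hd0). pose proof (Rmin_l r d0). pose proof (Rmin_r r d0).
  assert (ts - Rmin r d0 / 2 <= sm) by apply Rmax_l.
  assert (p <= sm) by apply Rmax_r.
  assert (sm < ts) by (apply Rmax_lub_lt; lra).
  pose proof (proj2 (K sm ltac:(lra)) ltac:(lra)).
  exists (phi sm - phi ts). split; [lra|]. intros u Hu Hlt.
  destruct (IVT_down phi sm ts u) as [s [Hs Es]]; try lra.
  - apply (cont_in_subinterval phi p q); auto; lra.
  - exists s. split; [lra|]. split; [lra|auto].
Qed.

Lemma hit_near_decrease ts : p <= ts <= q -> loc_decr phi p q ts ->
  forall r, 0 < r -> exists d, 0 < d /\ forall u, w - PI <= u <= w -> Rabs (u - phi ts) < d ->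
    exists s, p <= s <= q /\ Rabs (s - ts) < r /\ phi s = u.
Proof.
  intros Hts Hdec r Hr.
  destruct (hit_right_of_decrease ts Hts Hdec r Hr) as [dR [HdR HR]].
  destruct (hit_left_of_decrease ts Hts Hdec r Hr) as [dL [HdL HL]].
  exists (Rmin dR dL). split; [apply Rmin_pos; auto|].
  intros u Hu Hd. apply Rabs_def2 in Hd.
  pose proof (Rmin_l dR dL). pose proof (Rmin_r dR dL).
  destruct (Rle_dec u (phi ts)).
  - destruct (HR u ltac:(lra) ltac:(lra)) as [s [Hs [Hsr Es]]].
    exists s. split; [lra|]. split; [apply Rabs_def1; lra|auto].
  - destruct (HL u ltac:(lra) ltac:(lra)) as [s [Hs [Hsr Es]]].
    exists s. split; [lra|]. split; [apply Rabs_def1; lra|auto].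
Qed.

(* Levels near [u0] are hit near [lowest_hit u0], where [theta] is close to
   its value there. *)
Lemma theta_lowest_hit_usc_transversal u0 : w - PI <= u0 <= w ->
  omega_det u0 (theta (lowest_hit u0)) < 0 -> forall e, 0 < e -> exists d, 0 < d /\
  forall u, w - PI <= u <= w -> Rabs (u - u0) < d ->
    theta (lowest_hit u) < theta (lowest_hit u0) + e.
Proof.
  intros Hu0 HD e He.
  destruct (lowest_hit_spec u0 Hu0) as [Hts [Ets _]].
  set (ts := lowest_hit u0) in *.
  rewrite <- Ets in HD.
  destruct (theta_cont ts Hts e He) as [dt [Hdt Kt]].
  destruct (hit_near_decrease ts Hts (proj1 (phi_loc ts Hts) HD) dt Hdt) as [d [Hd Hnear]].
  exists d. split; auto. intros u Hu Hud. rewrite Ets in Hnear.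
  destruct (Hnear u Hu Hud) as [s [Hs [Hst Es]]].
  destruct (lowest_hit_spec u Hu) as [_ [_ [Hmin _]]].
  pose proof (Hmin s Hs Es). specialize (Kt s Hs Hst). apply Rabs_def2 in Kt. lra.
Qed.

(* When [omega_det] vanishes at the lowest hit, raising the latitude slightly
   makes it positive, and this persists for nearby levels; nonpositive hits
   of those levels must then lie below the raised latitude. *)
Lemma theta_lowest_hit_usc_tangent u0 : w - PI <= u0 <= w ->
  omega_det u0 (theta (lowest_hit u0)) = 0 -> forall e, 0 < e -> exists d, 0 < d /\
  forall u, w - PI <= u <= w -> Rabs (u - u0) < d ->
    theta (lowest_hit u) < theta (lowest_hit u0) + e.
Proof.
  intros Hu0 HD e He.
  destruct (lowest_hit_spec u0 Hu0) as [Hts _].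
  set (th := theta (lowest_hit u0)) in *.
  assert (Hth : - (PI / 2) < th < PI / 2) by (apply theta_range; auto).
  assert (Hcu0 : 0 < cos u0).
  { destruct (cos_branch_nonneg u0 Hu0) as [|E]; auto.
    rewrite omega_det_cos0 in HD; auto. lra. }
  set (th' := Rmin (th + e) ((th + PI / 2) / 2)).
  assert (th' <= th + e) by apply Rmin_l.
  assert (th' <= (th + PI / 2) / 2) by apply Rmin_r.
  assert (th < th') by (apply Rmin_glb_lt; lra).
  assert (Hpos : 0 < omega_det u0 th').
  { rewrite <- HD. apply omega_det_lt_compat; lra. }
  destruct (continuity_pt_pos_nbhd (fun u => omega_det u th') u0 ltac:(unfold omega_det; reg) Hpos)
    as [d1 [Hd1 K1]].
  destruct (continuity_pt_pos_nbhd cos u0 (continuity_cos u0) Hcu0) as [d2 [Hd2 K2]].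
  exists (Rmin d1 d2). split; [apply Rmin_pos; auto|].
  intros u Hu Hd. pose proof (Rmin_l d1 d2). pose proof (Rmin_r d1 d2).
  destruct (exists_nonpos_hit u Hu) as [t' [Ht' [Et' Dt']]].
  destruct (lowest_hit_spec u Hu) as [_ [_ [Hmin _]]].
  pose proof (Hmin t' Ht' Et').
  assert (theta t' < th'); [|lra].
  apply (lt_of_omega_det_lt u); [apply K2; lra|apply theta_range; auto|lra|].
  specialize (K1 u ltac:(lra)). simpl in K1. lra.
Qed.

Lemma theta_lowest_hit_cont : cont_in (fun u => theta (lowest_hit u)) (w - PI) w.
Proof.
  intros u0 Hu0 e He.
  destruct (theta_lowest_hit_lsc u0 Hu0 e He) as [d1 [Hd1 K1]].
  assert (Usc : exists d, 0 < d /\ forall u, w - PI <= u <= w -> Rabs (u - u0) < d ->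
      theta (lowest_hit u) < theta (lowest_hit u0) + e).
  { destruct (Rle_lt_or_eq_dec _ _ (proj2 (proj2 (proj2 (lowest_hit_spec u0 Hu0))))) as [Hlt|Heq].
    - apply theta_lowest_hit_usc_transversal; auto.
    - apply theta_lowest_hit_usc_tangent; auto. }
  destruct Usc as [d2 [Hd2 K2]].
  exists (Rmin d1 d2). split; [apply Rmin_pos; auto|].
  intros u Hu Hd. pose proof (Rmin_l d1 d2). pose proof (Rmin_r d1 d2).
  specialize (K1 u Hu ltac:(lra)). specialize (K2 u Hu ltac:(lra)).
  apply Rabs_def1; lra.
Qed.

Lemma branch_lift : exists Th : R -> R,
  cont_in Th (w - PI) w /\ Th w = theta p /\ Th (w - PI) = theta q /\
  forall u, w - PI <= u <= w ->
    exists t, p <= t <= q /\ phi t = u /\ theta t = Th u /\ omega_det u (Th u) <= 0.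
Proof.
  exists (fun u => theta (lowest_hit u)).
  split; [exact theta_lowest_hit_cont|].
  split; [rewrite lowest_hit_w; auto|].
  split; [rewrite lowest_hit_w_minus_PI; auto|].
  intros u Hu. destruct (lowest_hit_spec u Hu) as [A [B [_ D]]].
  exists (lowest_hit u). auto.
Qed.

End Branch.

Section Winding.

Variables (phi theta : R -> R) (t0 t1 v0 : R).
Hypothesis t0_le_t1 : t0 <= t1.
Hypothesis phi_cont : cont_in phi t0 t1.
Hypothesis theta_cont : cont_in theta t0 t1.
Hypothesis theta_range : forall t, t0 <= t <= t1 -> - (PI / 2) < theta t < PI / 2.
Hypothesis phi_loc : forall t, t0 <= t <= t1 ->
  (omega_det (phi t) (theta t) < 0 -> loc_decr phi t0 t1 t) /\
  (0 < omega_det (phi t) (theta t) -> loc_decr (fun x => - phi x) t0 t1 t).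
Hypothesis cos_v0 : cos v0 = 0.
Hypothesis sin_v0 : sin v0 = 1.
Hypothesis phi_t0 : phi t0 = v0.
Hypothesis phi_t1 : phi t1 = v0 - 2 * PI.

Lemma phi_crosses_meridian_once c : cos c = 0 ->
  forall s s', t0 <= s -> s < s' <= t1 -> phi s <= c -> phi s' < c.
Proof.
  intros Hc. apply level_crossed_once; auto.
  intros t Ht Et. apply (phi_loc t Ht). rewrite Et, omega_det_cos0; auto. lra.
Qed.

Lemma exists_half_turn : exists m, t0 <= m <= t1 /\ phi m = v0 - PI /\
  (forall s, t0 <= s <= m -> v0 - PI <= phi s <= v0) /\
  (forall s, m <= s <= t1 -> v0 - 2 * PI <= phi s <= v0 - PI).
Proof.
  pose proof PI_RGT_0.
  assert (Hc1 : cos (v0 - PI) = 0) by (rewrite cos_minus, cos_v0, sin_v0, sin_PI; ring).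
  assert (Hc2 : cos (v0 - 2 * PI) = 0) by (rewrite cos_minus, cos_v0, sin_v0, sin_2PI; ring).
  pose proof (phi_crosses_meridian_once v0 cos_v0) as X0.
  pose proof (phi_crosses_meridian_once _ Hc1) as X1.
  pose proof (phi_crosses_meridian_once _ Hc2) as X2.
  destruct (IVT_down phi t0 t1 (v0 - PI)) as [m [Hm Em]]; auto; [lra|].
  assert (Upper : forall s, t0 <= s <= t1 -> phi s <= v0).
  { intros s Hs. destruct (Req_dec s t0) as [->|E]; [lra|]. left. apply (X0 t0); lra. }
  assert (Lower : forall s, t0 <= s <= t1 -> v0 - 2 * PI <= phi s).
  { intros s Hs. destruct (Req_dec s t1) as [->|E]; [lra|].
    apply Rnot_lt_le. intro Hlt. pose proof (X2 s t1 ltac:(lra) ltac:(lra) ltac:(lra)). lra. }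
  exists m. split; auto. split; auto. split.
  - intros s Hs. split; [|apply Upper; lra].
    destruct (Req_dec s m) as [->|E]; [lra|].
    apply Rnot_lt_le. intro Hlt. pose proof (X1 s m ltac:(lra) ltac:(lra) ltac:(lra)). lra.
  - intros s Hs. split; [apply Lower; lra|].
    destruct (Req_dec s m) as [->|E]; [lra|]. left. apply (X1 m); lra.
Qed.

Lemma half_turn_lift p q w : t0 <= p -> p <= q -> q <= t1 ->
  cos w = 0 -> sin w = 1 -> phi p = w -> phi q = w - PI ->
  (forall s, p <= s <= q -> w - PI <= phi s <= w) ->
  exists Th : R -> R, cont_in Th (w - PI) w /\ Th w = theta p /\ Th (w - PI) = theta q /\
  forall u, w - PI <= u <= w ->
    exists t, p <= t <= q /\ phi t = u /\ theta t = Th u /\ omega_det u (Th u) <= 0.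
Proof.
  intros Hp Hpq Hq Hc Hs Ep Eq Range.
  apply branch_lift; auto.
  - apply (cont_in_subinterval phi t0 t1); auto.
  - apply (cont_in_subinterval theta t0 t1); auto.
  - intros t Ht. apply theta_range. lra.
  - intros t Ht. destruct (phi_loc t ltac:(lra)) as [L1 L2].
    split; intro HD; apply (loc_decr_subinterval _ t0 t1); auto.
Qed.

(* The antipodal map [(u, th) |-> (u + PI, - th)] preserves [omega_det] and
   turns this case into the previous one. *)
Lemma half_turn_lift_antipodal p q w : t0 <= p -> p <= q -> q <= t1 ->
  cos w = 0 -> sin w = -1 -> phi p = w -> phi q = w - PI ->
  (forall s, p <= s <= q -> w - PI <= phi s <= w) ->
  exists Th : R -> R, cont_in Th (w - PI) w /\ Th w = theta p /\ Th (w - PI) = theta q /\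
  forall u, w - PI <= u <= w ->
    exists t, p <= t <= q /\ phi t = u /\ theta t = Th u /\ omega_det u (Th u) <= 0.
Proof.
  intros Hp Hpq Hq Hc Hs Ep Eq Range.
  destruct (branch_lift (fun x => phi x + PI) (fun x => - theta x) p q (w + PI))
    as [Th [C [Ea [Eb Img]]]]; auto.
  - apply cont_in_plus_const, (cont_in_subinterval phi t0 t1); auto.
  - apply cont_in_opp, (cont_in_subinterval theta t0 t1); auto.
  - rewrite neg_cos, Hc. ring.
  - rewrite neg_sin, Hs. ring.
  - intros t Ht. pose proof (theta_range t ltac:(lra)). lra.
  - intros t Ht. pose proof (Range t Ht). lra.
  - rewrite Ep. ring.
  - rewrite Eq. ring.
  - intros t Ht. rewrite omega_det_shift. destruct (phi_loc t ltac:(lra)) as [L1 L2].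
    split; intro HD;
      [apply (loc_decr_shift phi _ PI)|apply (loc_decr_shift (fun x => - phi x) _ (- PI))];
      try (intro; ring); apply (loc_decr_subinterval _ t0 t1); auto.
  - exists (fun u => - Th (u + PI)). split; [|split; [|split]].
    + apply cont_in_opp, (cont_in_comp_in Th (fun u => u + PI) (w + PI - PI) (w + PI)); auto.
      * apply (cont_in_ext (fun u => PI + 1 * u)); [intros; ring|apply cont_in_affine].
      * intros; lra.
    + rewrite Ea. ring.
    + replace (w - PI + PI) with (w + PI - PI) by ring. rewrite Eb. ring.
    + intros u Hu. destruct (Img (u + PI) ltac:(lra)) as [t [Ht [Et [Tt Dt]]]].
      exists t. split; auto. split; [lra|]. split; [lra|].
      rewrite <- Tt, omega_det_shift in Dt. rewrite <- Tt, Ropp_involutive. exact Dt.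
Qed.

Lemma winding_lift : exists Th : R -> R,
  cont_in Th (v0 - 2 * PI) v0 /\ Th v0 = theta t0 /\ Th (v0 - 2 * PI) = theta t1 /\
  forall u, v0 - 2 * PI <= u <= v0 ->
    exists t, t0 <= t <= t1 /\ phi t = u /\ theta t = Th u /\ omega_det u (Th u) <= 0.
Proof.
  pose proof PI_RGT_0.
  destruct exists_half_turn as [m [Hm [Em [Range1 Range2]]]].
  destruct (half_turn_lift t0 m v0) as [Th1 [C1 [E1a [E1b Img1]]]]; auto; try lra.
  destruct (half_turn_lift_antipodal m t1 (v0 - PI)) as [Th2 [C2 [E2a [E2b Img2]]]]; auto; try lra.
  { rewrite cos_minus, cos_v0, sin_v0, sin_PI. ring. }
  { rewrite sin_minus, cos_v0, sin_v0, cos_PI. ring. }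
  { intros s Hs. replace (v0 - PI - PI) with (v0 - 2 * PI) by ring. auto. }
  replace (v0 - PI - PI) with (v0 - 2 * PI) in * by ring.
  exists (fun u => if Rle_dec u (v0 - PI) then Th2 u else Th1 u).
  split; [|split; [|split]].
  - apply cont_in_glue; [lra|auto|auto|congruence].
  - destruct (Rle_dec v0 (v0 - PI)); [lra|auto].
  - destruct (Rle_dec (v0 - 2 * PI) (v0 - PI)); [auto|lra].
  - intros u Hu. destruct (Rle_dec u (v0 - PI)).
    + destruct (Img2 u ltac:(lra)) as [t [Ht Rest]]. exists t. split; [lra|auto].
    + destruct (Img1 u ltac:(lra)) as [t [Ht Rest]]. exists t. split; [lra|auto].
Qed.

End Winding.

Lemma cont_on_Psph_path U V a b : cont_in U a b -> cont_in V a b ->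
  cont_on (fun s => Psph (U s) (V s)) a b.
Proof.
  intros HU HV. unfold Psph. apply cont_on_triple.
  - apply cont_in_mult; apply cont_in_comp; auto; apply continuity_cos.
  - apply cont_in_mult; apply cont_in_comp; auto; [apply continuity_cos|apply continuity_sin].
  - apply cont_in_comp; auto. apply continuity_sin.
Qed.


Theorem lemma3
  (a b c : R -> R)
  (Ha : forall t, 0 < t -> continuous a t)
  (Hb : forall t, 0 < t -> continuous b t)
  (Hc : forall t, 0 < t -> continuous c t)
  (y dy ddy : R -> R)
  (Hy : forall t, 0 < t -> is_derive y t (dy t))
  (Hdy : forall t, 0 < t -> is_derive dy t (ddy t))
  (Hddy : forall t, 0 < t ->
     is_derive ddy t (- (a t * ddy t + b t * dy t + c t * y t)))
  (Hnz : exists t, 0 < t /\ y t <> 0)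
  (t0 t1 : R) (Ht0 : 0 < t0) (Ht01 : t0 <= t1)
  (Hnopole : forall t, t0 <= t <= t1 ->
     kappa y dy ddy t <> north_pole /\ kappa y dy ddy t <> south_pole)
  (phi theta : R -> R)
  (Hphi : cont_on phi t0 t1) (Htheta : cont_on theta t0 t1)
  (Hrange : forall t, t0 <= t <= t1 -> - (PI / 2) <= theta t <= PI / 2)
  (Hrep : forall t, t0 <= t <= t1 -> kappa y dy ddy t = Psph (phi t) (theta t))
  (Hphi0 : exists k : Z, phi t0 = PI / 2 + 2 * PI * IZR k)
  (Hphi1 : phi t1 = phi t0 - 2 * PI) :
  exists kt : R -> pt3,
    cont_on kt 0 1 /\
    (forall s, 0 <= s <= 1 -> InS2 (kt s) /\ ~ InOmega (kt s)) /\
    kt 0 = kappa y dy ddy t0 /\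
    kt 1 = kappa y dy ddy t1 /\
    (forall s, 0 <= s <= 1 -> exists t, t0 <= t <= t1 /\ kt s = kappa y dy ddy t).
Proof.
  destruct Hphi0 as [k Hk].
  destruct (cos_sin_PI2_period k) as [Hcos Hsin]. rewrite <- Hk in Hcos, Hsin.
  pose proof (cont_on_cont_in _ _ _ Hphi) as Hphi'.
  pose proof (theta_strict_range y dy ddy phi theta t0 t1 Hnopole Hrange Hrep) as Hth.
  destruct (winding_lift phi theta t0 t1 (phi t0) Ht01 Hphi' (cont_on_cont_in _ _ _ Htheta) Hth
    (phi_loc_monotone y dy ddy phi theta t0 t1 Ht0 Hy Hdy Hnopole Hrange Hrep Hphi')
    Hcos Hsin eq_refl Hphi1) as [Th [HTh [HTh0 [HTh1 Himg]]]].
  set (u := fun s => phi t0 + (- 2 * PI) * s).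
  assert (Hu : forall s, 0 <= s <= 1 -> phi t0 - 2 * PI <= u s <= phi t0)
    by (intros s Hs; unfold u; pose proof PI_RGT_0; nra).
  exists (fun s => Psph (u s) (Th (u s))).
  split; [|split; [|split; [|split]]].
  - apply cont_on_Psph_path; [apply cont_in_affine|].
    apply (cont_in_comp_in Th u (phi t0 - 2 * PI) (phi t0)); auto. apply cont_in_affine.
  - intros s Hs. destruct (Himg (u s) (Hu s Hs)) as [t [Ht [_ [Et D]]]].
    split; [apply Psph_InS2|]. apply Psph_not_InOmega; auto.
    rewrite <- Et. apply Rgt_not_eq, cos_gt_0; apply Hth; auto.
  - unfold u. rewrite Rmult_0_r, Rplus_0_r, HTh0. symmetry. apply Hrep. lra.
  - unfold u. replace (phi t0 + -2 * PI * 1) with (phi t1) by lra.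
    rewrite Hphi1, HTh1, <- Hphi1. symmetry. apply Hrep. lra.
  - intros s Hs. destruct (Himg (u s) (Hu s Hs)) as [t [Ht [Et [Tt _]]]].
    exists t. split; auto. rewrite Hrep, Et, Tt; auto.
Qed.
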